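(* Let $G$ be a multi-graph with a vertex cut $S$ of size $3$. Let $V_1,V_2$ be a partition of $V(G)\setminus S$ such that $V_1$ and $V_2$ are non-empty, there are no edges between $V_1$ and $V_2$ in $G$, $|V_1|$ is odd and $|V_2|$ is even. Then there exists a graph $G'$ such that $|V(G')|\leq |V_1|+3\leq |V(G)|-2$ and $\mu(G')\geq \mu(G)$.
   Context: Multi-graphs have no self-loops; the skeleton of a multi-graph is its underlying simple graph. Each edge $e$ between $u$ and $v$ consists of two half-edges $e_u$ and $e_v$. A half-edge colouring is a function $c$ from the set of half-edges to $\mathbb{N}_0$; each edge $e$ also gets a weight $w(e)\in\mathbb{C}$. The weight of a perfect matching $P$ is $\prod_{e\in P}w(e)$. A vertex colouring is a map $vc:V\to\mathbb{N}_0$; it filters out the subgraph consisting of all edges $e$ (between $u,v$) with $c(e_u)=vc(u)$ and $c(e_v)=vc(v)$ (with the same weights). The weight of $vc$ is the sum of the weights of all perfect matchings of this filtered subgraph; $vc$ is feasible if the filtered subgraph has at least one perfect matching (an infeasible colouring has weight $0$). An edge-coloured edge-weighted multi-graph is GHZ if every feasible monochromatic vertex colouring has weight $1$ and every non-monochromatic vertex colouring has weight $0$; its dimension is the number of feasible monochromatic vertex colourings. For a graph $G$, the matching index $\mu(G)$ is the maximum (possibly $\infty$) of the dimension over all GHZ edge-coloured edge-weighted multi-graphs whose skeleton is (the skeleton of) $G$. *)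

From HB Require Import structures.
From mathcomp Require Import all_boot all_order all_algebra.
From mathcomp Require Import complex.
From mathcomp Require Import Rstruct.
Set Implicit Arguments.
Unset Strict Implicit.
Unset Printing Implicit Defensive.
Import Order.TTheory GRing.Theory Num.Theory.
Local Open Scope ring_scope.

Definition CC : Type := complex Rdefinitions.R.

Definition simple_graph (V : finType) (g : rel V) : Prop :=
  (forall u v, g u v = g v u) /\ (forall v, ~~ g v v).

Definition vertex_cut (V : finType) (g : rel V) (S : {set V}) : Prop :=
  exists x y : V, [/\ x \notin S, y \notin S &
    ~~ connect [rel a b | [&& g a b, a \notin S & b \notin S]] x y].

(* Edges are indexed by 'I_mE; edge i joins msrc i and mdst i.
   Parallel edges are allowed (distinct indices). *)
Record mgraph (V : finType) := MGraph {
  mE : nat;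
  msrc : 'I_mE -> V;
  mdst : 'I_mE -> V }.
Arguments mE {V} _.
Arguments msrc {V} _ _.
Arguments mdst {V} _ _.

Definition mloopless (V : finType) (G : mgraph V) : Prop :=
  forall i, msrc G i != mdst G i.

Definition mskeleton (V : finType) (G : mgraph V) : rel V :=
  [rel u v | [exists i : 'I_(mE G),
     ((msrc G i == u) && (mdst G i == v)) || ((msrc G i == v) && (mdst G i == u))]].

(* Edge i joins src i and dst i; its half-edge at src i has colour csrc i,
   its half-edge at dst i has colour cdst i; its weight is wgt i. *)
Record ecgraph (V : finType) := ECGraph {
  nE : nat;
  src : 'I_nE -> V;
  dst : 'I_nE -> V;
  csrc : 'I_nE -> nat;
  cdst : 'I_nE -> nat;
  wgt : 'I_nE -> CC }.
Arguments nE {V} _.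
Arguments src {V} _ _.
Arguments dst {V} _ _.
Arguments csrc {V} _ _.
Arguments cdst {V} _ _.
Arguments wgt {V} _ _.

Section ECGraphDefs.
Variables (V : finType) (M : ecgraph V).

Definition ecloopless : Prop := forall i, src M i != dst M i.

Definition ecskeleton : rel V :=
  [rel u v | [exists i : 'I_(nE M),
     ((src M i == u) && (dst M i == v)) || ((src M i == v) && (dst M i == u))]].

Definition filtered (vc : V -> nat) (i : 'I_(nE M)) : bool :=
  (csrc M i == vc (src M i)) && (cdst M i == vc (dst M i)).

Definition is_pm (vc : V -> nat) (P : {set 'I_(nE M)}) : bool :=
  [forall i in P, filtered vc i] &&
  [forall x : V, #|[set i in P | (src M i == x) || (dst M i == x)]| == 1%N].

Definition vc_weight (vc : V -> nat) : CC :=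
  \sum_(P : {set 'I_(nE M)} | is_pm vc P) \prod_(i in P) wgt M i.

Definition feasible (vc : V -> nat) : Prop := exists P, is_pm vc P.

Definition monochromatic (vc : V -> nat) : Prop := forall u v, vc u = vc v.

Definition GHZ : Prop :=
  forall vc : V -> nat,
    (monochromatic vc -> feasible vc -> vc_weight vc = 1) /\
    (~ monochromatic vc -> vc_weight vc = 0).

Definition dim_ge (n : nat) : Prop :=
  exists f : 'I_n -> V -> nat,
    (forall k, monochromatic (f k) /\ feasible (f k)) /\
    (forall k l, k != l -> exists v, f k v <> f l v).

End ECGraphDefs.

Definition mu_ge (V : finType) (g : rel V) (n : nat) : Prop :=
  exists M : ecgraph V,
    [/\ ecloopless M, ecskeleton M =2 g, GHZ M & dim_ge M n].

(* mu(g) <= mu(g')  (comparison in N u {oo}) *)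
Definition mu_le (V V' : finType) (g : rel V) (g' : rel V') : Prop :=
  forall n, mu_ge g n -> mu_ge g' n.

(* Let M be a GHZ graph with skeleton G.  Calling E1 the edges avoiding V2 and
   E2 the others, the weight of a colouring splits over the cut as
     sum_(S' <= S) W_E1(V1 + S') * W_E2(V2 + (S - S')),
   where W_A(U) weighs the perfect matchings of U by edges of A.
   - If W_E2(V2) is nonzero for some monochromatic colouring of V2, replace V2
     by a gadget of edges inside S that carry the E2-side weights, summed over
     the colour of V2; rescaling the edges at some v0 in V1 by the colour
     restores the normalisation.  This gives a GHZ graph on V1 + S.
   - Otherwise the term S' = S vanishes, so only the E1-weights of V1 + s for
     single s in S matter: contract V1 to v0 joined to each s by edges carrying
     them, and keep the gadget.  This gives a GHZ graph on {v0} + S.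
   Zero-weight edges coloured 0/1 make both skeletons complete without
   changing any weight, and both graphs keep every feasible colour of M.
   As dimensions are downward closed, one of the two graphs dominates for all
   dimensions. *)

From HB Require Import structures.
From mathcomp Require Import all_boot all_order all_algebra.
From mathcomp Require Import complex Rstruct ring zify.
From Stdlib Require Import Classical.
Set Implicit Arguments.
Unset Strict Implicit.
Unset Printing Implicit Defensive.
Import Order.TTheory GRing.Theory Num.Theory.

Lemma sum_subsets_setU (R : Type) (idx : R) (op : Monoid.com_law idx)
    (T : finType) (A1 A2 : {set T}) (F : {set T} -> R) :
  [disjoint A1 & A2] ->
  \big[op/idx]_(P : {set T} | P \subset A1 :|: A2) F P =
  \big[op/idx]_(P1 : {set T} | P1 \subset A1)
     \big[op/idx]_(P2 : {set T} | P2 \subset A2) F (P1 :|: P2).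
Proof.
move=> dA; rewrite pair_big_dep /=.
have splitK (P : {set T}) : P \subset A1 :|: A2 -> (P :&: A1) :|: (P :&: A2) = P.
  by move=> sP; rewrite -setIUr; apply/setIidPl.
rewrite (reindex_onto (fun p => p.1 :|: p.2) (fun P => (P :&: A1, P :&: A2)) splitK).
apply: eq_bigl => -[P1 P2] /=; apply/andP/andP => [[_ /eqP[<- <-]]|[s1 s2]].
  by rewrite !subsetIr.
have restr (Q1 Q2 B : {set T}) : Q1 \subset B -> [disjoint Q2 & B] -> (Q1 :|: Q2) :&: B = Q1.
  by move=> sQ dQ; rewrite setIUl (setIidPl sQ) (disjoint_setI0 dQ) setU0.
split; first exact: setUSS.
rewrite (restr _ _ _ s1) ?(disjointWl s2) 1?disjoint_sym //.
by rewrite setUC (restr _ _ _ s2) ?(disjointWl s1).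
Qed.

Section Matchings.
Variable V : finType.

(* An ecgraph with an arbitrary finite type of edges, so that graphs can be
   built by sums, subtypes and restrictions. *)
Record wgraph := WGraph {
  Edge : finType;
  esrc : Edge -> V;
  edst : Edge -> V;
  ecsrc : Edge -> nat;
  ecdst : Edge -> nat;
  ewgt : Edge -> CC }.

Definition incident (g : wgraph) (i : Edge g) (x : V) : bool :=
  (esrc i == x) || (edst i == x).
Definition kept (g : wgraph) (vc : V -> nat) (i : Edge g) : bool :=
  (ecsrc i == vc (esrc i)) && (ecdst i == vc (edst i)).
Definition pdeg (g : wgraph) (P : {set Edge g}) (x : V) : nat :=
  #|[set i in P | incident i x]|.
Definition perfect (g : wgraph) (vc : V -> nat) (U : {set V}) (P : {set Edge g}) :=
  [forall i in P, kept vc i] && [forall x, pdeg P x == (x \in U)].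
Definition pmweight (g : wgraph) (A : {set Edge g}) (vc : V -> nat) (U : {set V}) : CC :=
  (\sum_(P : {set Edge g} | (P \subset A) && perfect vc U P) \prod_(i in P) ewgt i)%R.
Definition loopfree (g : wgraph) (A : {set Edge g}) : Prop :=
  forall i, i \in A -> esrc i != edst i.

Variable g : wgraph.
Implicit Types (A B P : {set Edge g}) (U : {set V}) (vc : V -> nat) (i j : Edge g) (x y : V).

Lemma incident_src i : incident i (esrc i). Proof. by rewrite /incident eqxx. Qed.
Lemma incident_dst i : incident i (edst i). Proof. by rewrite /incident eqxx orbT. Qed.

Lemma pdegE P x : pdeg P x = \sum_(i in P) incident i x.
Proof.
rewrite /pdeg -sum1_card (eq_bigl (fun i => (i \in P) && incident i x)) => [|i].
  by rewrite big_mkcondr /=; apply: eq_bigr => i _; case: (incident i x).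
by rewrite inE.
Qed.

Lemma pdeg_set1 i x : pdeg [set i] x = incident i x.
Proof. by rewrite pdegE big_set1. Qed.

Lemma pdegU P1 P2 x : [disjoint P1 & P2] -> pdeg (P1 :|: P2) x = pdeg P1 x + pdeg P2 x.
Proof.
move=> d; rewrite !pdegE (eq_bigl [predU P1 & P2]) ?bigU // => i.
by rewrite !inE.
Qed.

Lemma pdeg1_uniq P x i j :
  pdeg P x = 1 -> i \in P -> j \in P -> incident i x -> incident j x -> i = j.
Proof.
rewrite /pdeg => /eqP/cards1P[k E] iP jP ti tj.
have : i \in [set i in P | incident i x] by rewrite inE iP ti.
have : j \in [set i in P | incident i x] by rewrite inE jP tj.
by rewrite E !inE => /eqP-> /eqP->.
Qed.

Lemma pdeg_incident P U x i :
  [forall x, pdeg P x == (x \in U)] -> i \in P -> incident i x -> x \in U.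
Proof.
move=> /forallP /(_ x) /eqP dP iP ix.
have : 0 < pdeg P x by apply/card_gt0P; exists i; rewrite inE iP ix.
by rewrite dP; case: (x \in U).
Qed.

Lemma perfect_kept vc U P i : perfect vc U P -> i \in P -> kept vc i.
Proof. by case/andP=> /forall_inP kP _; apply: kP. Qed.

Lemma perfect_pdeg vc U P x : perfect vc U P -> pdeg P x = (x \in U).
Proof. by case/andP=> _ /forallP /(_ x) /eqP. Qed.

Lemma perfect_incident vc U P i x : perfect vc U P -> i \in P -> incident i x -> x \in U.
Proof. by case/andP=> _; apply: pdeg_incident. Qed.

Lemma perfect_cover vc U P x : perfect vc U P -> x \in U -> exists2 i, i \in P & incident i x.
Proof.
move=> pm xU; have : 0 < pdeg P x by rewrite (perfect_pdeg x pm) xU.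
by case/card_gt0P=> i; rewrite inE => /andP[]; exists i.
Qed.

Lemma perfect_support vc U P : perfect vc U P -> U = [set x | pdeg P x == 1].
Proof. by move=> pm; apply/setP=> x; rewrite inE (perfect_pdeg x pm); case: (x \in U). Qed.

Lemma perfect_card A vc U P :
  loopfree A -> P \subset A -> perfect vc U P -> #|U| = (#|P|).*2.
Proof.
move=> lf sPA pm.
have -> : #|U| = \sum_x pdeg P x.
  rewrite -sum1_card big_mkcond /=; apply: eq_bigr => x _.
  by rewrite (perfect_pdeg x pm); case: (x \in U).
under eq_bigr do rewrite pdegE.
rewrite exchange_big /= -muln2 -sum_nat_const; apply: eq_bigr => i iP.
have ne := lf i (subsetP sPA i iP).
rewrite (eq_bigr (fun x => (esrc i == x) + (edst i == x))) => [|x _].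
  have sum_eq1 (a : V) : \sum_x (a == x) = 1.
    by rewrite (bigD1 a) //= eqxx big1 // => x; rewrite eq_sym => /negPf ->.
  by rewrite big_split /= !sum_eq1.
rewrite /incident; case: eqP => [<-|]; last by case: eqP.
by rewrite eq_sym (negPf ne).
Qed.

Lemma eq_perfect vc1 vc2 U P : {in U, vc1 =1 vc2} -> perfect vc1 U P = perfect vc2 U P.
Proof.
move=> e; rewrite /perfect; case dP: [forall x, pdeg P x == (x \in U)]; rewrite ?andbF ?andbT //.
apply: eq_forallb_in => i iP; rewrite /kept.
by rewrite !e //; [apply: (pdeg_incident dP iP (incident_dst i)) |
                   apply: (pdeg_incident dP iP (incident_src i))].
Qed.

Lemma eq_pmweight A vc1 vc2 U : {in U, vc1 =1 vc2} -> pmweight A vc1 U = pmweight A vc2 U.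
Proof. by move=> e; apply: eq_bigl => P; rewrite (eq_perfect _ e). Qed.

Lemma pmweight_set0 A vc : pmweight A vc set0 = 1%R.
Proof.
rewrite /pmweight (big_pred1 set0) ?big_set0 // => P /=; apply/andP/eqP => [[_ pm]|->].
  apply/setP=> i; rewrite inE; apply/negP=> iP.
  by have := perfect_incident pm iP (incident_src i); rewrite inE.
rewrite sub0set; split=> //; apply/andP; split; first by apply/forall_inP=> i; rewrite inE.
by apply/forallP=> x; rewrite inE pdegE big_set0.
Qed.

Lemma pmweight_uncovered A vc U x : x \in U ->
  (forall i, i \in A -> kept vc i -> ~~ incident i x) -> pmweight A vc U = 0%R.
Proof.
move=> xU nx; rewrite /pmweight big_pred0 // => P; apply/negP=> /andP[sPA pm].
case: (perfect_cover pm xU) => i iP ix.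
by move: (nx i (subsetP sPA i iP) (perfect_kept pm iP)); rewrite ix.
Qed.

Lemma pmweight_odd A vc U : loopfree A -> odd #|U| -> pmweight A vc U = 0%R.
Proof.
move=> lf oU; rewrite /pmweight big_pred0 // => P; apply/negP=> /andP[sPA pm].
by move: oU; rewrite (perfect_card lf sPA pm) odd_double.
Qed.

Lemma pmweight_star A vc U v0 :
  loopfree A -> (forall i, i \in A -> incident i v0) -> 2 < #|U| -> pmweight A vc U = 0%R.
Proof.
move=> lf star cU; rewrite /pmweight big_pred0 // => P; apply/negP=> /andP[sPA pm].
have : #|P| <= 1.
  have -> : #|P| = pdeg P v0.
    apply: eq_card => i; rewrite inE.
    by case: (boolP (i \in P)) => //= iP; rewrite star //; apply: (subsetP sPA).
  by rewrite (perfect_pdeg v0 pm); case: (v0 \in U).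
by move: cU; rewrite (perfect_card lf sPA pm); case: #|P| => [|[]].
Qed.

Lemma pmweight_pair A vc x y : loopfree A -> x != y ->
  pmweight A vc [set x; y] =
  (\sum_(i in A | kept vc i && ([set esrc i; edst i] == [set x; y])) ewgt i)%R.
Proof.
move=> lf nxy.
pose C := [set i in A | kept vc i && ([set esrc i; edst i] == [set x; y])].
rewrite (eq_bigl (fun i => i \in C)) => [|i]; last by rewrite inE.
rewrite /pmweight (eq_bigl (fun P => P \in [set [set i] | i in C])) => [|P /=].
  rewrite big_imset /= => [|i j _ _]; last exact: set1_inj.
  by apply: eq_bigr => i _; rewrite big_set1.
apply/andP/imsetP => [[sPA pm] | [i iC ->]]; last first.
  move: iC; rewrite inE => /andP[iA /andP[ki /eqP e]]; split; first by rewrite sub1set.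
  apply/andP; split; first by apply/forall_inP=> j; rewrite inE => /eqP->.
  by apply/forallP=> z; rewrite pdeg_set1 -e !inE /incident ![_ == z]eq_sym.
have /cards1P[i eP] : #|P| == 1.
  by move: (perfect_card lf sPA pm); rewrite cards2 nxy; case: #|P| => [|[]].
subst P; exists i => //; have iA : i \in A by apply: (subsetP sPA); rewrite inE.
have i1 : i \in [set i] by rewrite inE.
rewrite inE iA (perfect_kept pm i1) /= eqEcard !cards2 nxy (lf i iA) andbT.
apply/subsetP=> z; rewrite !inE => /orP[]/eqP->.
  by have := perfect_incident pm i1 (incident_src i); rewrite !inE.
by have := perfect_incident pm i1 (incident_dst i); rewrite !inE.
Qed.

Lemma pmweight_null A B vc U :
  A \subset B -> (forall i, i \in B -> i \notin A -> ewgt i = 0%R) ->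
  pmweight B vc U = pmweight A vc U.
Proof.
move=> sAB w0; rewrite /pmweight [LHS]big_mkcond [RHS]big_mkcond.
apply: eq_bigr => P _; case: (perfect vc U P); rewrite ?andbF ?andbT //.
case: (boolP (P \subset A)) => sPA; first by rewrite (subset_trans sPA sAB).
case: ifP => // sPB; case/subsetPn: sPA => i iP niA.
by rewrite (bigD1 i) //= w0 ?mul0r //; apply: (subsetP sPB).
Qed.

Section Union.
Variables (vc : V -> nat) (U : {set V}) (P1 P2 : {set Edge g}).
Hypothesis dP : [disjoint P1 & P2].

Lemma perfect_setU_join U1 : U1 \subset U ->
  perfect vc U1 P1 -> perfect vc (U :\: U1) P2 -> perfect vc U (P1 :|: P2).
Proof.
move=> sU pm1 pm2; apply/andP; split.
  apply/forall_inP=> i; rewrite inE => /orP[] iP.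
    exact: perfect_kept pm1 iP.
  exact: perfect_kept pm2 iP.
apply/forallP=> x; rewrite pdegU // (perfect_pdeg x pm1) (perfect_pdeg x pm2) inE.
case: (boolP (x \in U1)) => xU1 /=; last by case: (x \in U).
by rewrite (subsetP sU x xU1).
Qed.

Lemma perfect_setU_split : perfect vc U (P1 :|: P2) ->
  let U1 := [set x | pdeg P1 x == 1] in
  [/\ U1 \subset U, perfect vc U1 P1 & perfect vc (U :\: U1) P2].
Proof.
move=> pm U1.
have deg x : pdeg P1 x + pdeg P2 x = (x \in U) by rewrite -pdegU ?(perfect_pdeg x pm).
have kept_in (Q : {set Edge g}) : Q \subset P1 :|: P2 -> [forall i in Q, kept vc i].
  by move=> sQ; apply/forall_inP=> i /(subsetP sQ); exact: perfect_kept pm.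
split.
- apply/subsetP=> x; rewrite inE => /eqP d1.
  by have := deg x; rewrite d1; case: (x \in U).
- rewrite /perfect kept_in ?subsetUl //; apply/forallP=> x; rewrite inE.
  by have := deg x; case: (pdeg P1 x) => [|[|n]] //; case: (x \in U).
- rewrite /perfect kept_in ?subsetUr //; apply/forallP=> x; rewrite !inE.
  by have := deg x; case: (pdeg P1 x) => [|[|n]]; case: (x \in U) => /=; lia.
Qed.

Lemma sum_perfect_setU (c : CC) :
  (\sum_(U1 : {set V} | U1 \subset U)
     if perfect vc U1 P1 && perfect vc (U :\: U1) P2 then c else 0)%R =
  if perfect vc U (P1 :|: P2) then c else 0%R.
Proof.
case: ifP => [pm | npm]; last first.
  apply: big1 => U1 sU; case: ifP => // /andP[pm1 pm2].
  by rewrite (perfect_setU_join sU pm1 pm2) in npm.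
case: (perfect_setU_split pm) => sU pm1 pm2.
rewrite (bigD1 [set x | pdeg P1 x == 1]) //= pm1 pm2 big1 ?addr0 // => U1 /andP[_ nU1].
by case: ifP => // /andP[/perfect_support e _]; rewrite e eqxx in nU1.
Qed.

End Union.

Lemma pmweight_setU A1 A2 vc U : [disjoint A1 & A2] ->
  pmweight (A1 :|: A2) vc U =
  (\sum_(U1 : {set V} | U1 \subset U) pmweight A1 vc U1 * pmweight A2 vc (U :\: U1))%R.
Proof.
move=> dA; rewrite /pmweight big_mkcondr sum_subsets_setU //.
under [RHS]eq_bigr do rewrite !big_mkcondr big_distrlr /=.
rewrite [RHS]exchange_big; apply: eq_bigr => P1 s1 /=.
rewrite [RHS]exchange_big; apply: eq_bigr => P2 s2 /=.
have dP : [disjoint P1 & P2] by apply: disjointWl s1 _; apply: disjointWr s2 _.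
rewrite -sum_perfect_setU //; apply: eq_bigr => U1 _.
rewrite (eq_bigl [predU P1 & P2]) => [|i]; last by rewrite !inE.
rewrite bigU //.
by case: (perfect vc U1 P1); case: (perfect vc _ P2); rewrite /= ?mul0r ?mulr0.
Qed.

End Matchings.

Section Rescale.
Variables (V : finType) (g : wgraph V) (v0 : V) (ok : pred nat) (kap : nat -> CC).
Implicit Types (A P : {set Edge g}) (U : {set V}) (vc : V -> nat) (i : Edge g).

Definition vfactor i : CC :=
  if esrc i == v0 then kap (ecsrc i) else if edst i == v0 then kap (ecdst i) else 1%R.
Definition allowed i : bool :=
  (if esrc i == v0 then ok (ecsrc i) else true) && (if edst i == v0 then ok (ecdst i) else true).
Definition rescale : wgraph V :=
  WGraph (@esrc _ g) (@edst _ g) (@ecsrc _ g) (@ecdst _ g) (fun i => vfactor i * ewgt i)%R.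

Lemma vfactor_not_incident i : ~~ incident i v0 -> vfactor i = 1%R.
Proof. by rewrite /incident /vfactor negb_or => /andP[/negPf-> /negPf->]. Qed.

Lemma allowed_not_incident i : ~~ incident i v0 -> allowed i.
Proof. by rewrite /incident /allowed negb_or => /andP[/negPf-> /negPf->]. Qed.

Lemma vfactor_incident vc i : kept vc i -> incident i v0 -> vfactor i = kap (vc v0).
Proof.
rewrite /kept /incident /vfactor => /andP[/eqP-> /eqP->].
by case: eqP => [->|_] //= /eqP ->; rewrite eqxx.
Qed.

Lemma allowed_incident vc i : kept vc i -> incident i v0 -> allowed i = ok (vc v0).
Proof.
rewrite /kept /incident /allowed => /andP[/eqP-> /eqP->].
case: eqP => [->|_] //=; last by move=> /eqP ->; rewrite eqxx.
by case: eqP => [->|]; rewrite ?andbb ?andbT.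
Qed.

(* A perfect matching covering v0 uses exactly one edge at v0, so rescaling
   multiplies its weight by kap (vc v0), or kills it when vc v0 is not ok. *)
Lemma pmweight_rescale A vc U : v0 \in U ->
  pmweight (g:=rescale) [set i in A | allowed i] vc U =
  ((if ok (vc v0) then kap (vc v0) else 0) * pmweight A vc U)%R.
Proof.
move=> vU; rewrite /pmweight mulr_sumr [LHS]big_mkcond [RHS]big_mkcond /=.
apply: eq_bigr => P _; case pm: (perfect vc U P); rewrite ?andbF ?andbT ?mulr0; last first.
  by move: pm; rewrite /perfect /= => ->; rewrite andbF.
have -> : perfect (g:=rescale) vc U P by exact: pm.
case: (perfect_cover pm vU) => i0 i0P ti0.
have ki0 := perfect_kept pm i0P.
have others j : j \in P -> j != i0 -> ~~ incident j v0.
  move=> jP /eqP nj; apply/negP=> tj; apply: nj.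
  by apply: (pdeg1_uniq _ jP i0P tj ti0); rewrite (perfect_pdeg v0 pm) vU.
have factor : (\prod_(i in P) vfactor i = kap (vc v0))%R.
  rewrite (bigD1 i0) //= (vfactor_incident ki0 ti0) big1 ?mulr1 // => j /andP[jP nj].
  by apply: vfactor_not_incident; apply: others.
have -> : (P \subset [set i in A | allowed i]) = (P \subset A) && ok (vc v0).
  apply/subsetP/andP => [sP | [/subsetP sP okv] i iP].
    split; first by apply/subsetP=> i /sP; rewrite inE => /andP[].
    by have := sP i0 i0P; rewrite inE (allowed_incident ki0 ti0) => /andP[].
  rewrite inE sP //=; case: (eqVneq i i0) => [->|ni].
    by rewrite (allowed_incident ki0 ti0).
  by apply: allowed_not_incident; apply: others.
rewrite andbT big_split /= factor.
by case: (P \subset A); case: (ok (vc v0)); rewrite /= ?mul0r ?mulr0.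
Qed.

End Rescale.

Section Transport.
Variables (V V' : finType) (g : wgraph V) (g' : wgraph V').
Variables (h : V' -> V) (phi : Edge g' -> Edge g).
Hypotheses (h_inj : injective h) (phi_inj : injective phi)
  (phi_src : forall i, esrc (phi i) = h (esrc i)) (phi_dst : forall i, edst (phi i) = h (edst i))
  (phi_csrc : forall i, ecsrc (phi i) = ecsrc i) (phi_cdst : forall i, ecdst (phi i) = ecdst i)
  (phi_wgt : forall i, ewgt (phi i) = ewgt i).
Variables (vc : V -> nat) (vc' : V' -> nat).
Hypothesis vc_h : forall x, vc' x = vc (h x).

Lemma incident_transport i x : incident (phi i) (h x) = incident i x.
Proof. by rewrite /incident phi_src phi_dst !(inj_eq h_inj). Qed.

Lemma pdeg_transport (P : {set Edge g'}) x : pdeg (phi @: P) (h x) = pdeg P x.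
Proof.
rewrite !pdegE big_imset /= => [|a b _ _ /phi_inj //].
by apply: eq_bigr => i _; rewrite incident_transport.
Qed.

Lemma pdeg_transport_out (P : {set Edge g'}) x :
  (forall x', h x' != x) -> pdeg (phi @: P) x = 0.
Proof.
move=> out; rewrite pdegE big1 // => i /imsetP[j _ ->].
by rewrite /incident phi_src phi_dst !(negPf (out _)).
Qed.

Lemma kept_transport i : kept vc (phi i) = kept vc' i.
Proof. by rewrite /kept phi_src phi_dst phi_csrc phi_cdst !vc_h. Qed.

Lemma perfect_transport (U : {set V'}) (P : {set Edge g'}) :
  perfect vc (h @: U) (phi @: P) = perfect vc' U P.
Proof.
rewrite /perfect; congr (_ && _).
  apply/forall_inP/forall_inP => kP i.
    by move=> iP; rewrite -kept_transport; apply: kP; apply: imset_f.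
  by case/imsetP=> j jP ->; rewrite kept_transport; apply: kP.
apply/forallP/forallP => dP x.
  by have := dP (h x); rewrite pdeg_transport mem_imset.
case: (pickP (fun x' => h x' == x)) => [x' /eqP <- | out].
  by rewrite pdeg_transport mem_imset.
rewrite pdeg_transport_out => [|x']; last by rewrite out.
case: imsetP => // -[x' _ e]; by move: (out x'); rewrite e eqxx.
Qed.

Lemma pmweight_transport (A : {set Edge g'}) (U : {set V'}) :
  pmweight (phi @: A) vc (h @: U) = pmweight A vc' U.
Proof.
rewrite /pmweight (eq_bigl (fun P : {set Edge g} => P \in [set phi @: P' | P' : {set Edge g'} in
          [set P' : {set Edge g'} | (P' \subset A) && perfect vc' U P']])) => [|P /=].
  rewrite big_imset /= => [|P1 P2 _ _]; last exact: imset_inj.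
  apply: eq_big => [P'|P' _]; first by rewrite inE.
  rewrite big_imset /= => [|a b _ _ /phi_inj //].
  by apply: eq_bigr => i _; rewrite phi_wgt.
apply/andP/imsetP => [[sPA pm] | [P' + ->]].
  have eP : P = phi @: (phi @^-1: P).
    apply/setP=> e; apply/idP/imsetP => [eP | [a + ->]]; last by rewrite inE.
    by case/imsetP: (subsetP sPA e eP) => a _ ea; exists a; rewrite // inE -ea.
  exists (phi @^-1: P) => //; rewrite inE -perfect_transport -eP pm andbT.
  by apply/subsetP => a; rewrite inE => /(subsetP sPA); rewrite mem_imset.
by rewrite inE => /andP[sPA pm]; rewrite imsetS // perfect_transport.
Qed.

End Transport.

Section EdgeEmbedding.
Variables (V : finType) (g g' : wgraph V) (phi : Edge g' -> Edge g).
Hypotheses (phi_inj : injective phi)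
  (phi_edge : forall i, [/\ esrc (phi i) = esrc i, edst (phi i) = edst i,
                            ecsrc (phi i) = ecsrc i, ecdst (phi i) = ecdst i
                          & ewgt (phi i) = ewgt i]).
Implicit Types (A P : {set Edge g'}) (U : {set V}) (vc : V -> nat).

Lemma perfect_embed vc U P : perfect vc U (phi @: P) = perfect vc U P.
Proof.
have := perfect_transport (h := id) (fun _ _ => id) phi_inj
  (fun i => let: And5 e _ _ _ _ := phi_edge i in e)
  (fun i => let: And5 _ e _ _ _ := phi_edge i in e)
  (fun i => let: And5 _ _ e _ _ := phi_edge i in e)
  (fun i => let: And5 _ _ _ e _ := phi_edge i in e) (fun _ => erefl) U P.
by rewrite imset_id.
Qed.

Lemma pmweight_embed A vc U : pmweight (phi @: A) vc U = pmweight A vc U.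
Proof.
have := pmweight_transport (h := id) (fun _ _ => id) phi_inj
  (fun i => let: And5 e _ _ _ _ := phi_edge i in e)
  (fun i => let: And5 _ e _ _ _ := phi_edge i in e)
  (fun i => let: And5 _ _ e _ _ := phi_edge i in e)
  (fun i => let: And5 _ _ _ e _ := phi_edge i in e)
  (fun i => let: And5 _ _ _ _ e := phi_edge i in e) (fun _ => erefl) A U.
by rewrite imset_id.
Qed.

End EdgeEmbedding.

Section Cut.
Variables (V : finType) (g1 g2 : wgraph V) (A1 : {set Edge g1}) (A2 : {set Edge g2}).
Variables (vc1 vc2 : V -> nat) (Z S Y : {set V}).
Hypotheses (dZS : [disjoint Z & S]) (dZY : [disjoint Z & Y]) (dSY : [disjoint S & Y])
  (A1_Y : forall i y, i \in A1 -> y \in Y -> ~~ incident i y)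
  (A2_Z : forall i z, i \in A2 -> z \in Z -> ~~ incident i z).

Lemma setD_cut (S' : {set V}) : S' \subset S -> (Z :|: S :|: Y) :\: (Z :|: S') = Y :|: (S :\: S').
Proof.
move=> sS; apply/setP=> x; rewrite !inE.
case: (boolP (x \in Z)) => xZ /=.
  by rewrite (disjointFr dZY xZ) (disjointFr dZS xZ) andbF.
case: (boolP (x \in Y)) => xY /=; last by rewrite orbF.
rewrite orbT andbT; apply/negP => /(subsetP sS) xS.
by rewrite (disjointFr dSY xS) in xY.
Qed.

Lemma pmweight_cut_vanish (U1 : {set V}) : U1 \subset Z :|: S :|: Y -> U1 != Z :|: (U1 :&: S) ->
  (pmweight A1 vc1 U1 * pmweight A2 vc2 ((Z :|: S :|: Y) :\: U1))%R = 0%R.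
Proof.
move=> sU nU.
case: (boolP [exists y, (y \in U1) && (y \in Y)]) => [/existsP[y /andP[yU yY]] | noY].
  by rewrite (pmweight_uncovered (x := y)) ?mul0r // => i iA _; apply: A1_Y.
case: (boolP (Z \subset U1)) => [sZ | /subsetPn[z zZ zU]]; last first.
  rewrite (pmweight_uncovered (x := z) (U := _ :\: U1)) ?mulr0 ?inE ?zU ?zZ //.
  by move=> i iA _; apply: A2_Z.
case/negP: nU; apply/eqP/setP=> x; rewrite !inE.
case: (boolP (x \in U1)) => xU /=; last first.
  by rewrite orbF; apply/esym/negP => /(subsetP sZ); rewrite (negPf xU).
have := subsetP sU x xU; rewrite !inE -orbA => /or3P[-> | -> | xY]; rewrite ?orbT //.
by case/existsP: noY; exists x; rewrite xU.
Qed.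

Lemma sum_pmweight_cut :
  (\sum_(U1 : {set V} | U1 \subset Z :|: S :|: Y)
      pmweight A1 vc1 U1 * pmweight A2 vc2 ((Z :|: S :|: Y) :\: U1))%R =
  (\sum_(S' : {set V} | S' \subset S)
      pmweight A1 vc1 (Z :|: S') * pmweight A2 vc2 (Y :|: (S :\: S')))%R.
Proof.
rewrite (bigID (fun U1 => U1 == Z :|: (U1 :&: S))) /=.
rewrite [X in (_ + X)%R]big1 ?addr0 => [|U1 /andP[sU nU]]; last exact: pmweight_cut_vanish.
rewrite (reindex_onto (fun S' => Z :|: S') (fun U1 => U1 :&: S)) /= => [|U1 /andP[_ /eqP e]];
  last by rewrite -e.
have ZS' (S' : {set V}) : S' \subset S -> (Z :|: S') :&: S = S'.
  by move=> sS; rewrite setIUl (disjoint_setI0 dZS) set0U; apply/setIidPl.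
apply: eq_big => [S' | S' /andP[_ /eqP eS]]; last by rewrite setD_cut // -eS subsetIr.
apply/andP/idP => [[_ /eqP <-] | sS]; first exact: subsetIr.
by rewrite ZS' // !eqxx andbT; split=> //; apply: subsetU; rewrite setUS.
Qed.

End Cut.

Section Conversions.
Variable V : finType.

Definition wgraph_of (M : ecgraph V) : wgraph V :=
  WGraph (src M) (dst M) (csrc M) (cdst M) (wgt M).

Definition ecgraph_of (g : wgraph V) : ecgraph V :=
  @ECGraph V #|Edge g| (fun i => esrc (enum_val i)) (fun i => edst (enum_val i))
    (fun i => ecsrc (enum_val i)) (fun i => ecdst (enum_val i)) (fun i => ewgt (enum_val i)).

Lemma is_pm_perfect (M : ecgraph V) vc P : is_pm vc P = perfect (g:=wgraph_of M) vc setT P.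
Proof. by rewrite /is_pm /perfect; congr (_ && _); apply: eq_forallb => x; rewrite in_setT. Qed.

Lemma eq_is_pm (M : ecgraph V) vc1 vc2 P : vc1 =1 vc2 -> is_pm (M:=M) vc1 P = is_pm vc2 P.
Proof. by move=> e; rewrite !is_pm_perfect; apply: eq_perfect => x _; apply: e. Qed.

Lemma vc_weight_pmweight (M : ecgraph V) vc :
  vc_weight M vc = pmweight (g:=wgraph_of M) setT vc setT.
Proof. by apply: eq_bigl => P; rewrite subsetT is_pm_perfect. Qed.

Lemma feasible_of_vc_weight (M : ecgraph V) vc : vc_weight M vc != 0%R -> feasible M vc.
Proof.
rewrite /vc_weight; case: (pickP (is_pm (M:=M) vc)) => [P pm _ | none]; first by exists P.
by rewrite big_pred0 ?eqxx.
Qed.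

Lemma enum_val_embeds (g : wgraph V) (i : Edge (wgraph_of (ecgraph_of g))) :
  [/\ esrc (enum_val i) = esrc i, edst (enum_val i) = edst i,
      ecsrc (enum_val i) = ecsrc i, ecdst (enum_val i) = ecdst i
    & ewgt (enum_val i) = ewgt i].
Proof. by []. Qed.

Lemma vc_weight_ecgraph_of (g : wgraph V) vc :
  vc_weight (ecgraph_of g) vc = pmweight (g:=g) setT vc setT.
Proof.
rewrite vc_weight_pmweight.
rewrite -(@pmweight_embed _ g (wgraph_of (ecgraph_of g)) _ enum_val_inj (@enum_val_embeds g)).
congr pmweight; apply/setP=> i; rewrite in_setT.
by apply/imsetP; exists (enum_rank i); rewrite ?in_setT ?enum_rankK.
Qed.

Lemma feasible_ecgraph_of (g : wgraph V) vc :
  feasible (ecgraph_of g) vc -> exists P : {set Edge g}, perfect vc setT P.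
Proof.
case=> P pm; exists (enum_val @: P).
by rewrite (@perfect_embed _ g (wgraph_of (ecgraph_of g)) _ enum_val_inj (@enum_val_embeds g))
  -is_pm_perfect.
Qed.

Lemma ecskeleton_ecgraph_of (g : wgraph V) u v :
  ecskeleton (ecgraph_of g) u v =
  [exists i : Edge g, ((esrc i == u) && (edst i == v)) || ((esrc i == v) && (edst i == u))].
Proof.
apply/existsP/existsP => [[i e] | [i e]]; first by exists (enum_val i).
by exists (enum_rank i); rewrite /= enum_rankK.
Qed.

End Conversions.

Section GraphSum.
Variables (V : finType) (g1 g2 : wgraph V).

Definition wgraph_sum : wgraph V :=
  @WGraph V (Edge g1 + Edge g2)%type
    (fun e => match e with inl i => esrc i | inr j => esrc j end)
    (fun e => match e with inl i => edst i | inr j => edst j end)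
    (fun e => match e with inl i => ecsrc i | inr j => ecsrc j end)
    (fun e => match e with inl i => ecdst i | inr j => ecdst j end)
    (fun e => match e with inl i => ewgt i | inr j => ewgt j end).

Lemma inl_inj : injective (@inl (Edge g1) (Edge g2)). Proof. by move=> a b []. Qed.
Lemma inr_inj : injective (@inr (Edge g1) (Edge g2)). Proof. by move=> a b []. Qed.

Lemma pmweight_inl (A : {set Edge g1}) vc U :
  pmweight (g:=wgraph_sum) (inl @: A) vc U = pmweight A vc U.
Proof. exact: (@pmweight_embed _ wgraph_sum g1 inl inl_inj). Qed.

Lemma pmweight_inr (A : {set Edge g2}) vc U :
  pmweight (g:=wgraph_sum) (inr @: A) vc U = pmweight A vc U.
Proof. exact: (@pmweight_embed _ wgraph_sum g2 inr inr_inj). Qed.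

Lemma setT_sum : [set: Edge wgraph_sum] = inl @: [set: Edge g1] :|: inr @: [set: Edge g2].
Proof.
by apply/setP=> -[i|j]; rewrite !inE ?(mem_imset _ _ inl_inj) ?(mem_imset _ _ inr_inj) ?in_setT ?orbT.
Qed.

Lemma pmweight_sum vc U :
  pmweight (g:=wgraph_sum) setT vc U =
  (\sum_(U1 : {set V} | U1 \subset U)
     pmweight (g:=g1) setT vc U1 * pmweight (g:=g2) setT vc (U :\: U1))%R.
Proof.
rewrite setT_sum pmweight_setU; first by under eq_bigr do rewrite pmweight_inl pmweight_inr.
rewrite -setI_eq0; apply/eqP/setP=> e; rewrite !inE.
by apply/negP=> /andP[/imsetP[a _ ->] /imsetP[b _]].
Qed.

Lemma pmweight_sum_null vc U : (forall j : Edge g2, ewgt j = 0%R) ->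
  pmweight (g:=wgraph_sum) setT vc U = pmweight (g:=g1) setT vc U.
Proof.
move=> w0; rewrite -pmweight_inl; apply: pmweight_null; first exact: subsetT.
by move=> [i|j] _ /=; [rewrite (mem_imset _ _ inl_inj) in_setT | rewrite w0].
Qed.

End GraphSum.

Section Subgraph.
Variables (V : finType) (g : wgraph V) (A : {set Edge g}).

Definition subgraph : wgraph V :=
  @WGraph V {i : Edge g | i \in A} (fun j => esrc (val j)) (fun j => edst (val j))
    (fun j => ecsrc (val j)) (fun j => ecdst (val j)) (fun j => ewgt (val j)).

Lemma pmweight_subgraph vc U : pmweight (g:=subgraph) setT vc U = pmweight A vc U.
Proof.
rewrite -(@pmweight_embed _ g subgraph val val_inj) //; congr pmweight.
apply/setP=> i; apply/imsetP/idP => [[j _ ->] | iA]; first exact: valP.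
by exists (Sub i iA); rewrite ?SubK.
Qed.

End Subgraph.

Section Restriction.
Variables (V : finType) (p : pred V) (x0 : {x : V | p x}).

Definition restrict (g : wgraph V) : wgraph {x : V | p x} :=
  WGraph (fun i => insubd x0 (esrc i)) (fun i => insubd x0 (edst i))
    (@ecsrc _ g) (@ecdst _ g) (@ewgt _ g).

Variables (g : wgraph V) (vc : V -> nat) (vc' : {x : V | p x} -> nat).
Hypotheses (g_in : forall i : Edge g, p (esrc i) && p (edst i)) (vc_val : forall y, vc' y = vc (val y)).

Let restrict_src (i : Edge g) : @esrc _ g i = val (@esrc _ (restrict g) i).
Proof. by rewrite /= insubdK //; case/andP: (g_in i). Qed.
Let restrict_dst (i : Edge g) : @edst _ g i = val (@edst _ (restrict g) i).
Proof. by rewrite /= insubdK //; case/andP: (g_in i). Qed.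

Lemma pmweight_restrict (A : {set Edge g}) (U : {set {x : V | p x}}) :
  pmweight (g:=restrict g) A vc' U = pmweight A vc (val @: U).
Proof.
have := pmweight_transport (g':=restrict g) val_inj (fun _ _ => id) restrict_src restrict_dst
  (fun _ => erefl) (fun _ => erefl) (fun _ => erefl) vc_val A U.
by rewrite imset_id.
Qed.

Lemma perfect_restrict (P : {set Edge g}) (U : {set {x : V | p x}}) :
  perfect (g:=restrict g) vc' U P = perfect vc (val @: U) P.
Proof.
have := perfect_transport (g':=restrict g) val_inj (fun _ _ => id) restrict_src restrict_dst
  (fun _ => erefl) (fun _ => erefl) vc_val U P.
by rewrite imset_id.
Qed.

End Restriction.

Lemma mu_ge_complete (V : finType) (x0 : V) (g : wgraph V) (ok : pred nat) n (cs : 'I_n -> nat) :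
  (forall i : Edge g, esrc i != edst i) ->
  (forall u v : V, u != v -> exists i : Edge g, esrc i = u /\ edst i = v) ->
  (forall vc, monochromatic vc -> feasible (ecgraph_of g) vc -> ok (vc x0)) ->
  (forall vc, monochromatic vc -> ok (vc x0) -> vc_weight (ecgraph_of g) vc = 1%R) ->
  (forall vc, ~ monochromatic vc -> vc_weight (ecgraph_of g) vc = 0%R) ->
  (forall k, ok (cs k)) -> injective cs ->
  mu_ge [rel u v : V | u != v] n.
Proof.
move=> loopless complete ok_feasible w1 w0 ok_cs cs_inj.
exists (ecgraph_of g); split.
- by move=> i; apply: loopless.
- move=> u v; rewrite ecskeleton_ecgraph_of /=; apply/existsP/idP.
    case=> i /orP[]/andP[/eqP<- /eqP<-]; first exact: loopless.
    by rewrite eq_sym; apply: loopless.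
  by move=> nuv; case: (complete u v nuv) => i [<- <-]; exists i; rewrite !eqxx.
- by move=> vc; split=> [mono fe|]; [apply: w1 => //; apply: ok_feasible | apply: w0].
- exists (fun k _ => cs k); split=> [k | k l nkl].
    by split=> //; apply: feasible_of_vc_weight; rewrite w1 ?oner_eq0.
  by exists x0 => e; move/eqP: nkl; apply; apply: cs_inj.
Qed.

Lemma mu_ge_widen (V : finType) (g : rel V) m n : m <= n -> mu_ge g n -> mu_ge g m.
Proof.
move=> le [M [loopless skel ghz [f [f_ok f_inj]]]]; exists M; split => //.
exists (fun k => f (widen_ord le k)); split=> [k | k l nkl]; first exact: f_ok.
by apply: f_inj; apply: contra nkl => /eqP[e]; apply/eqP/val_inj.
Qed.

Lemma mu_le_cover (V V1 V2 : finType) (g : rel V) (g1 : rel V1) (g2 : rel V2) :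
  (forall n, mu_ge g n -> mu_ge g1 n \/ mu_ge g2 n) -> mu_le g g1 \/ mu_le g g2.
Proof.
move=> cover; case: (classic (mu_le g g1)) => [|not_le1]; [by left | right].
have [n0 [gn0 not1n0]] : exists n0, mu_ge g n0 /\ ~ mu_ge g1 n0.
  apply: NNPP => none; apply: not_le1 => n gn; apply: NNPP => n1.
  by apply: none; exists n.
move=> n gn; case: (cover n gn) => // g1n; case: (leqP n0 n) => [le | lt].
  by case: not1n0; apply: mu_ge_widen le g1n.
case: (cover n0 gn0) => // g2n0; exact: mu_ge_widen (ltnW lt) g2n0.
Qed.

Lemma not_monochromatic_comp (V V' : finType) (h : V' -> V) (vc : V -> nat) (vc' : V' -> nat) :
  (forall y, vc (h y) = vc' y) -> ~ monochromatic vc' -> ~ monochromatic vc.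
Proof. by move=> e nmono mono; apply: nmono => u v; rewrite -!e. Qed.

Lemma sum_delta n (lam F : nat -> CC) c : c < n -> F c = 1%R -> (forall d, d != c -> F d = 0%R) ->
  (\sum_(d < n) lam d * F d)%R = lam c.
Proof.
move=> lt_cn F1 F0; rewrite (bigD1 (Ordinal lt_cn)) //= F1 mulr1 big1 ?addr0 // => d nd.
by rewrite F0 ?mulr0 //; apply: contraNneq nd => e; apply/eqP/val_inj.
Qed.

Lemma simple_graph_complete (V : finType) : simple_graph [rel u v : V | u != v].
Proof. by split => [u v|v] /=; rewrite ?eqxx // eq_sym. Qed.

Section Completion.
Variables (V : finType) (p : pred V) (x0 : {x : V | p x}) (g : wgraph V).
Hypotheses (g_in : forall i : Edge g, p (esrc i) && p (edst i))
  (g_loopless : forall i : Edge g, esrc i != edst i).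

(* Zero-weight edges between all pairs of vertices, coloured 0 and 1 at their
   ends: no monochromatic colouring keeps them, so they make the skeleton
   complete without changing any weight. *)
Definition dummy_edges : wgraph V :=
  @WGraph V {xy : {x : V | p x} * {x : V | p x} | xy.1 != xy.2}
    (fun e => val (val e).1) (fun e => val (val e).2) (fun _ => 0) (fun _ => 1) (fun _ => 0%R).

Definition completion : wgraph {x : V | p x} := restrict x0 (wgraph_sum g dummy_edges).

Definition extend (vc' : {x : V | p x} -> nat) (x : V) : nat :=
  if insub x is Some y then vc' y else 0.

Lemma extend_val vc' y : extend vc' (val y) = vc' y.
Proof. by rewrite /extend valK. Qed.

Lemma completion_in (i : Edge (wgraph_sum g dummy_edges)) : p (esrc i) && p (edst i).
Proof. by case: i => [i|e] /=; [apply: g_in | rewrite (valP (val e).1) (valP (val e).2)]. Qed.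

Lemma sum_dummy_loopless (i : Edge (wgraph_sum g dummy_edges)) : esrc i != edst i.
Proof.
case: i => [i|e] /=; first exact: g_loopless.
by apply: contraNneq (valP e) => /val_inj ->.
Qed.

Lemma completion_loopless (i : Edge completion) : esrc i != edst i.
Proof.
have [ps pd] := andP (completion_in i).
by apply/eqP => /(congr1 val); rewrite /= !insubdK //; apply/eqP/sum_dummy_loopless.
Qed.

Lemma completion_complete u v : u != v -> exists i : Edge completion, esrc i = u /\ edst i = v.
Proof. by move=> nuv; exists (inr (exist _ (u, v) nuv)); rewrite /= !valKd. Qed.

Lemma val_setT : val @: [set: {x : V | p x}] = [set x | p x].
Proof.
apply/setP=> x; rewrite inE; apply/imsetP/idP => [[y _ ->] | px]; first exact: valP.
by exists (Sub x px); rewrite ?SubK.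
Qed.

Lemma vc_weight_completion vc' :
  vc_weight (ecgraph_of completion) vc' = pmweight (g:=g) setT (extend vc') [set x | p x].
Proof.
rewrite vc_weight_ecgraph_of (pmweight_restrict x0 (vc := extend vc') completion_in) => [|y].
  by rewrite val_setT pmweight_sum_null.
by rewrite extend_val.
Qed.

Lemma feasible_completion vc' : monochromatic vc' -> feasible (ecgraph_of completion) vc' ->
  exists2 i : Edge g, incident i (val x0) & kept (extend vc') i.
Proof.
move=> mono /feasible_ecgraph_of[P].
rewrite (perfect_restrict x0 (vc := extend vc') completion_in) => [pm|y]; last first.
  by rewrite extend_val.
have [[i|e] iP ix] := perfect_cover pm (imset_f val (in_setT x0)).
  by exists i => //; apply: (perfect_kept pm iP).
have := perfect_kept pm iP; rewrite /kept /= !extend_val (mono (val e).2 (val e).1).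
by case/andP=> /eqP <-.
Qed.

Lemma mu_ge_completion (ok : pred nat) n (cs : 'I_n -> nat) :
  (forall vc', monochromatic vc' ->
     forall i : Edge g, incident i (val x0) -> kept (extend vc') i -> ok (vc' x0)) ->
  (forall vc', monochromatic vc' -> ok (vc' x0) ->
     pmweight (g:=g) setT (extend vc') [set x | p x] = 1%R) ->
  (forall vc', ~ monochromatic vc' -> pmweight (g:=g) setT (extend vc') [set x | p x] = 0%R) ->
  (forall k, ok (cs k)) -> injective cs ->
  mu_ge [rel u v : {x : V | p x} | u != v] n.
Proof.
move=> ok_at w1 w0 ok_cs cs_inj.
apply: (mu_ge_complete (x0 := x0) completion_loopless completion_complete _ _ _ ok_cs cs_inj).
- by move=> vc' mono fe; case: (feasible_completion mono fe) => i; apply: ok_at.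
- by move=> vc' mono okv; rewrite vc_weight_completion w1.
- by move=> vc' nmono; rewrite vc_weight_completion w0.
Qed.

End Completion.

Section Cut3.
Variables (V : finType) (M : ecgraph V) (S V1 V2 : {set V}) (v0 y2 : V).
Hypotheses (M_loopless : ecloopless M)
  (no_edge12 : forall i, src M i \in V1 -> dst M i \notin V2)
  (no_edge21 : forall i, src M i \in V2 -> dst M i \notin V1)
  (V12_part : V1 :|: V2 = ~: S) (V12_disj : V1 :&: V2 = set0)
  (v0_V1 : v0 \in V1) (y2_V2 : y2 \in V2) (V1_odd : odd #|V1|) (V2_even : ~~ odd #|V2|)
  (card_S : #|S| = 3) (M_GHZ : GHZ M).

Local Notation gM := (wgraph_of M).

Lemma mem_V12 x : (x \in V1) || (x \in V2) = (x \notin S).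
Proof. by have := congr1 (fun X : {set V} => x \in X) V12_part; rewrite /= !inE. Qed.

Lemma S_notV1 x : x \in S -> x \notin V1.
Proof. by move=> xS; apply/negP=> x1; have := mem_V12 x; rewrite x1 xS. Qed.

Lemma S_notV2 x : x \in S -> x \notin V2.
Proof. by move=> xS; apply/negP=> x2; have := mem_V12 x; rewrite x2 xS orbT. Qed.

Lemma V1_notV2 x : x \in V1 -> x \notin V2.
Proof.
by move=> x1; apply/negP=> x2; have := congr1 (fun X : {set V} => x \in X) V12_disj; rewrite /= !inE x1 x2.
Qed.

Lemma notV12_S x : x \notin V1 -> x \notin V2 -> x \in S.
Proof. by move=> n1 n2; have := mem_V12 x; rewrite (negPf n1) (negPf n2) => /esym/negbFE. Qed.

Definition E1 : {set Edge gM} := [set i | (src M i \notin V2) && (dst M i \notin V2)].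
Definition E2 : {set Edge gM} := ~: E1.

Lemma gM_loopfree (A : {set Edge gM}) : loopfree A.
Proof. by move=> i _; apply: M_loopless. Qed.

Lemma E1_notV2 i y : i \in E1 -> y \in V2 -> ~~ incident (g:=gM) i y.
Proof.
rewrite inE /incident => /andP[n1 n2] y2'; apply/negP=> /orP[]/eqP e.
  by move: n1; rewrite [src M i]e y2'.
by move: n2; rewrite [dst M i]e y2'.
Qed.

Lemma E2_notV1 i z : i \in E2 -> z \in V1 -> ~~ incident (g:=gM) i z.
Proof.
rewrite !inE negb_and !negbK /incident /= => i2 z1; apply/negP=> /orP[]/eqP e.
  have {}e : src M i = z := e; subst z.
  by have := no_edge12 z1; have := V1_notV2 z1; case/orP: i2 => ->.
have {}e : dst M i = z := e; subst z; case/orP: i2 => i2.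
  by have := no_edge21 i2; rewrite z1.
by have := V1_notV2 z1; rewrite i2.
Qed.

Implicit Types (A : {set Edge gM}) (T U Z : {set V}) (vc : V -> nat) (x : V).

Lemma disjoint_V1S : [disjoint V1 & S].
Proof. by apply/pred0P=> x /=; apply/negP=> /andP[x1 /S_notV1]; rewrite x1. Qed.

Lemma disjoint_V1V2 : [disjoint V1 & V2].
Proof. by apply/pred0P=> x /=; apply/negP=> /andP[/V1_notV2/negPf->]. Qed.

Lemma disjoint_SV2 : [disjoint S & V2].
Proof. by apply/pred0P=> x /=; apply/negP=> /andP[/S_notV2/negPf->]. Qed.

Definition ncol : nat := (\max_(i : 'I_(nE M)) maxn (csrc M i) (cdst M i)).+1.

Lemma pmweight_large_colour A vc U x : x \in U -> ncol <= vc x -> pmweight A vc U = 0%R.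
Proof.
move=> xU large; apply: (pmweight_uncovered xU) => i _ /andP[/eqP cs /eqP cd].
have {}cs : csrc M i = vc (src M i) := cs; have {}cd : cdst M i = vc (dst M i) := cd.
have lt_s : csrc M i < ncol by rewrite ltnS; apply: leq_trans (leq_bigmax i); apply: leq_maxl.
have lt_d : cdst M i < ncol by rewrite ltnS; apply: leq_trans (leq_bigmax i); apply: leq_maxr.
apply/negP => /orP[]/eqP e.
  by move: lt_s; rewrite cs (_ : src M i = x) // ltnNge large.
by move: lt_d; rewrite cd (_ : dst M i = x) // ltnNge large.
Qed.

Lemma vc_weight_cut vc : vc_weight M vc =
  (\sum_(S' : {set V} | S' \subset S)
     pmweight E1 vc (V1 :|: S') * pmweight E2 vc (V2 :|: (S :\: S')))%R.
Proof.
rewrite vc_weight_pmweight -(setUCr E1) pmweight_setU -?setI_eq0 ?setICr //.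
have -> : [set: V] = V1 :|: S :|: V2.
  apply/setP=> x; rewrite !inE; case: (boolP (x \in V1)) => //= n1.
  by case: (boolP (x \in V2)) => n2; rewrite ?orbT // (notV12_S n1 n2).
apply: sum_pmweight_cut; [exact: disjoint_V1S | exact: disjoint_V1V2 | exact: disjoint_SV2 |
  exact: E1_notV2 | exact: E2_notV1].
Qed.

Definition beta (d : nat) : CC := pmweight E2 (fun _ => d) V2.

Definition sv (k : 'I_3) : V := enum_val (cast_ord (esym card_S) k).
Definition pv (k : 'I_3) : V := sv (k + 1)%R.
Definition qv (k : 'I_3) : V := sv (k + 2)%R.

Lemma sv_S k : sv k \in S. Proof. exact: enum_valP. Qed.
Lemma pv_S k : pv k \in S. Proof. exact: sv_S. Qed.
Lemma qv_S k : qv k \in S. Proof. exact: sv_S. Qed.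

Lemma sv_inj : injective sv.
Proof. by move=> k l /enum_val_inj/cast_ord_inj. Qed.

Lemma sv_onto x : x \in S -> exists k, x = sv k.
Proof.
move=> xS; exists (cast_ord card_S (enum_rank_in xS x)).
by rewrite /sv cast_ordK enum_rankK_in.
Qed.

Lemma pv_neq_qv k : pv k != qv k.
Proof. by rewrite (inj_eq sv_inj); case: k => [[|[|[|]]] ?]. Qed.
Lemma pv_neq_sv k : pv k != sv k.
Proof. by rewrite (inj_eq sv_inj); case: k => [[|[|[|]]] ?]. Qed.
Lemma qv_neq_sv k : qv k != sv k.
Proof. by rewrite (inj_eq sv_inj); case: k => [[|[|[|]]] ?]. Qed.

Lemma setD1_sv k : S :\ sv k = [set pv k; qv k].
Proof.
have cD : #|S :\ sv k| = 2 by move: (cardsD1 (sv k) S); rewrite sv_S card_S => -[].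
apply/esym/eqP; rewrite eqEcard cards2 pv_neq_qv cD leqnn andbT.
by apply/subsetP=> x; rewrite !inE => /orP[]/eqP->; rewrite ?pv_neq_sv ?qv_neq_sv ?pv_S ?qv_S.
Qed.

Lemma pair_inj k l : [set pv k; qv k] = [set pv l; qv l] -> k = l.
Proof.
rewrite -!setD1_sv => e; apply: sv_inj.
have := congr1 (fun X : {set V} => sv k \in X) e; rewrite /= !inE eqxx sv_S /= andbT.
by move/esym/negbFE/eqP.
Qed.

Lemma pair_of_cut T : T \subset S -> #|T| = 2 -> exists k, T = [set pv k; qv k].
Proof.
move=> sT cT; have /subsetPn[s sS sT'] : ~~ (S \subset T).
  by apply/negP=> /subset_leq_card; rewrite card_S cT.
case: (sv_onto sS) => k es; exists k; apply/eqP.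
rewrite eqEcard cards2 pv_neq_qv cT leqnn andbT -setD1_sv.
apply/subsetP=> x xT; rewrite !inE (subsetP sT x xT) andbT.
by apply: contraNneq sT' => ex; rewrite es -ex.
Qed.

Lemma singleton_of_cut T : T \subset S -> #|T| = 1 -> exists k, T = [set sv k].
Proof.
move=> sT /eqP/cards1P[x ex]; have : x \in S by apply: (subsetP sT); rewrite ex inE.
by case/sv_onto=> k ek; exists k; rewrite ex ek.
Qed.

Lemma card_V1U T : T \subset S -> #|V1 :|: T| = #|V1| + #|T|.
Proof.
move=> sT; rewrite cardsU (_ : V1 :&: T = set0) ?cards0 ?subn0 //.
by apply: disjoint_setI0; apply: disjointWr sT disjoint_V1S.
Qed.

Lemma card_V2U T : T \subset S -> #|V2 :|: T| = #|V2| + #|T|.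
Proof.
move=> sT; rewrite cardsU (_ : V2 :&: T = set0) ?cards0 ?subn0 //.
by apply: disjoint_setI0; apply: (disjointWr sT); rewrite disjoint_sym disjoint_SV2.
Qed.

Definition cutcol k (al be d : nat) x : nat :=
  if x == pv k then al else if x == qv k then be else d.

Definition pair_weight (lam : nat -> CC) k (al be : nat) : CC :=
  (\sum_(d < ncol) lam d * pmweight E2 (cutcol k al be d) (V2 :|: [set pv k; qv k]))%R.

(* One edge pv k -- qv k for each pair of colours; its weight records, up to the
   factor cst, the lam-weighted ways in which E2 matches V2 together with the
   pair when V2 is coloured d. *)
Definition gpairs (lam : nat -> CC) (cst : CC) : wgraph V :=
  @WGraph V ('I_3 * 'I_ncol * 'I_ncol)%type (fun t => pv t.1.1) (fun t => qv t.1.1)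
    (fun t => t.1.2 : nat) (fun t => t.2 : nat) (fun t => cst * pair_weight lam t.1.1 t.1.2 t.2)%R.

Lemma gpairs_loopfree lam cst (A : {set Edge (gpairs lam cst)}) : loopfree A.
Proof. by move=> t _; apply: pv_neq_qv. Qed.

Lemma pmweight_gpairs_pair lam cst vc k :
  pmweight (g:=gpairs lam cst) setT vc [set pv k; qv k] =
  if (vc (pv k) < ncol) && (vc (qv k) < ncol)
  then (cst * pair_weight lam k (vc (pv k)) (vc (qv k)))%R else 0%R.
Proof.
rewrite pmweight_pair ?pv_neq_qv //; last exact: gpairs_loopfree.
have kept_pair (t : Edge (gpairs lam cst)) :
    kept vc t && ([set pv t.1.1; qv t.1.1] == [set pv k; qv k]) =
    [&& t.1.1 == k, t.1.2 == vc (pv k) :> nat & t.2 == vc (qv k) :> nat].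
  rewrite /kept /=; case: (eqVneq t.1.1 k) => [-> | nk]; first by rewrite eqxx andbT.
  have -> : ([set pv t.1.1; qv t.1.1] == [set pv k; qv k]) = false.
    by apply: contraNF nk => /eqP/pair_inj ->.
  by rewrite andbF.
case: ifP => [/andP[lt_p lt_q] | large].
  rewrite (big_pred1 (k, Ordinal lt_p, Ordinal lt_q)) // => -[[l al] be].
  by rewrite in_setT kept_pair /=; apply/and3P/eqP => [[/eqP-> /eqP e1 /eqP e2] | [-> -> ->]];
    [congr (_, _, _); apply: val_inj | rewrite !eqxx].
rewrite big_pred0 // => -[[l al] be]; rewrite in_setT kept_pair /=.
by apply: contraFF large => /and3P[_ /eqP <- /eqP <-]; rewrite !ltn_ord.
Qed.

Lemma pmweight_gpairs lam cst vc (vcd : nat -> V -> nat) T :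
  (forall d x, x \in V2 -> vcd d x = d) -> (forall d x, x \in S -> vcd d x = vc x) ->
  T \subset S -> T != set0 ->
  pmweight (g:=gpairs lam cst) setT vc T =
  (cst * \sum_(d < ncol) lam d * pmweight E2 (vcd d) (V2 :|: T))%R.
Proof.
move=> vcd_V2 vcd_S sT nT.
case: (boolP (odd #|T|)) => oT.
  rewrite pmweight_odd //; last exact: gpairs_loopfree.
  rewrite big1 ?mulr0 // => d _; rewrite pmweight_odd ?mulr0 //; first exact: gM_loopfree.
  by rewrite card_V2U // oddD oT (negPf V2_even).
have /(pair_of_cut sT)[k ->] : #|T| = 2.
  have : #|T| <= 3 by rewrite -card_S; apply: subset_leq_card.
  by move: oT nT; rewrite -card_gt0; case: #|T| => [|[|[|[]]]].
rewrite pmweight_gpairs_pair; case: ifP => [/andP[lt_p lt_q] | /negbT].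
  congr (_ * _)%R; apply: eq_bigr => d _; congr (_ * _)%R.
  apply: eq_pmweight => x; rewrite !inE => /orP[x2 | /orP[]/eqP->].
  - have [np nq] : x != pv k /\ x != qv k.
      by split; apply: contraTneq x2 => ->; rewrite S_notV2 ?pv_S ?qv_S.
    by rewrite /cutcol (negPf np) (negPf nq) vcd_V2.
  - by rewrite /cutcol eqxx vcd_S ?pv_S.
  - by rewrite /cutcol eq_sym (negPf (pv_neq_qv k)) eqxx vcd_S ?qv_S.
rewrite negb_and -!leqNgt => large; rewrite big1 ?mulr0 // => d _.
case/orP: large => [lp | lq].
  rewrite (@pmweight_large_colour _ _ _ (pv k)) ?mulr0 ?vcd_S ?pv_S //.
  by rewrite !inE eqxx orbT.
rewrite (@pmweight_large_colour _ _ _ (qv k)) ?mulr0 ?vcd_S ?qv_S //.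
by rewrite !inE eqxx !orbT.
Qed.

Lemma pmweight_sum_gpairs (gA : wgraph V) lam cst vc Z : [disjoint Z & S] ->
  pmweight (g:=wgraph_sum gA (gpairs lam cst)) setT vc (Z :|: S) =
  (\sum_(S' : {set V} | S' \subset S)
     pmweight (g:=gA) setT vc (Z :|: S') *
     pmweight (g:=gpairs lam cst) setT vc (S :\: S'))%R.
Proof.
move=> dZS; rewrite pmweight_sum -(setU0 (Z :|: S)) sum_pmweight_cut //.
- by under eq_bigr do rewrite set0U.
- by rewrite -setI_eq0 setI0.
- by rewrite -setI_eq0 setI0.
- by move=> i y _; rewrite inE.
- move=> t z _ zZ; rewrite /incident /=; apply/negP=> /orP[]/eqP ez.
    by have := pv_S t.1.1; rewrite ez (disjointFr dZS zZ).
  by have := qv_S t.1.1; rewrite ez (disjointFr dZS zZ).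
Qed.

Definition ok_colour : pred nat :=
  fun c => (c < ncol) && [exists P : {set 'I_(nE M)}, is_pm (M:=M) (fun _ => c) P].

Lemma vc_weight_const c vc : ok_colour c -> (forall x, vc x = c) -> vc_weight M vc = 1%R.
Proof.
case/andP=> _ /existsP[P pm] vc_c; case: (M_GHZ vc) => w1 _; apply: w1 => [u v|].
  by rewrite !vc_c.
by exists P; rewrite (eq_is_pm _ vc_c).
Qed.

Lemma vc_weight_nonmono vc : ~ monochromatic vc -> vc_weight M vc = 0%R.
Proof. by case: (M_GHZ vc). Qed.

Lemma dim_ok_colours n : dim_ge M n ->
  exists cs : 'I_n -> nat, (forall k, ok_colour (cs k)) /\ injective cs.
Proof.
case=> f [f_ok f_inj]; exists (fun k => f k v0); split => [k | k l e].
  have [mono [P pm]] := f_ok k; apply/andP; split.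
    have pmM : perfect (g:=gM) (f k) setT P by rewrite -is_pm_perfect.
    have [i iP ix] := perfect_cover (x := v0) pmM (in_setT _).
    case/andP: (perfect_kept pmM iP) => /eqP cs _.
    have {}cs : csrc M i = f k (src M i) := cs.
    have := leq_bigmax (F := fun i : 'I_(nE M) => maxn (csrc M i) (cdst M i)) i.
    by rewrite -ltnS -/ncol cs (mono _ v0) => /(leq_trans _); apply; rewrite ltnS leq_maxl.
  by apply/existsP; exists P; rewrite -(eq_is_pm _ (fun x => mono x v0)).
case: (eqVneq k l) => // /f_inj[v []]; have [mk _] := f_ok k; have [ml _] := f_ok l.
by rewrite (mk v v0) (ml v v0).
Qed.

Definition in_V1S x : bool := x \notin V2.
Definition v1S : {x : V | in_V1S x} := exist _ v0 (V1_notV2 v0_V1).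

Lemma set_V1S : [set x | in_V1S x] = V1 :|: S.
Proof.
apply/setP=> x; rewrite !inE /in_V1S; case: (boolP (x \in V1)) => [/V1_notV2 -> // | n1].
by apply/idP/idP => [/(notV12_S n1) | /S_notV2].
Qed.

Section NonzeroBeta.
Variable d0 : 'I_ncol.
Hypothesis beta_d0 : beta d0 != 0%R.

(* bl is the E2-side weight sum_d lam1 d * beta d met when E1 covers all of S;
   the pair gadget carries the factor bl^-1 to cancel it, and lam1 is chosen
   only to make bl nonzero. *)
Definition lam1 (d : nat) : CC :=
  if (\sum_(d < ncol) beta d != 0)%R then 1%R else (1 + (d == d0 :> nat)%:R)%R.
Definition bl : CC := (\sum_(d < ncol) lam1 d * beta d)%R.

Lemma bl_neq0 : bl != 0%R.
Proof.
rewrite /bl /lam1; have [sum0 | sumn0] := eqVneq (\sum_(d < ncol) beta d)%R 0%R; last first.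
  by under eq_bigr do rewrite mul1r.
under eq_bigr do rewrite /= mulrDl mul1r.
rewrite big_split /= sum0 add0r (bigD1 d0) //= eqxx mul1r big1 ?addr0 // => d nd.
by rewrite (_ : (d == d0 :> nat) = false) ?mul0r //; apply: negbTE nd.
Qed.

Lemma lam1_neq0 d : lam1 d != 0%R.
Proof.
rewrite /lam1; case: ifP => _; first exact: oner_neq0.
by case: (d == d0 :> nat); rewrite ?addr0 ?oner_neq0 // -mulr2n pnatr_eq0.
Qed.

Definition kap1 (c : nat) : CC := (bl / lam1 c)%R.

Definition g1 : wgraph V :=
  @subgraph _ (rescale gM v0 kap1) [set i in E1 | allowed v0 ok_colour i].

Lemma pmweight_g1 vc U : v0 \in U ->
  pmweight (g:=g1) setT vc U =
  ((if ok_colour (vc v0) then kap1 (vc v0) else 0) * pmweight E1 vc U)%R.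
Proof. by move=> vU; rewrite pmweight_subgraph pmweight_rescale. Qed.

Definition gcase1 : wgraph V := wgraph_sum g1 (gpairs lam1 (bl^-1)%R).

Lemma gcase1_in (i : Edge gcase1) : in_V1S (esrc i) && in_V1S (edst i).
Proof.
case: i => [j|t] /=; last by rewrite /in_V1S !S_notV2 ?pv_S ?qv_S.
by have := valP j; rewrite !inE => /andP[/andP[n1 n2] _]; rewrite /in_V1S n1 n2.
Qed.

Lemma gcase1_loopless (i : Edge gcase1) : esrc i != edst i.
Proof. by case: i => [j|t] /=; [apply: M_loopless | apply: pv_neq_qv]. Qed.

Definition vcd1 (vc' : {x : V | in_V1S x} -> nat) (d : nat) x : nat :=
  if x \in V2 then d else extend vc' x.

Lemma vcd1_val (vc' : {x : V | in_V1S x} -> nat) d y : vcd1 vc' d (val y) = vc' y.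
Proof. by rewrite /vcd1 (negPf (valP y)) extend_val. Qed.

Lemma pmweight_gpairs1 (vc' : {x : V | in_V1S x} -> nat) (S' : {set V}) : S' \subset S ->
  pmweight (g:=gpairs lam1 (bl^-1)%R) setT (extend vc') (S :\: S') =
  (bl^-1 * \sum_(d < ncol) lam1 d * pmweight E2 (vcd1 vc' d) (V2 :|: (S :\: S')))%R.
Proof.
move=> sS; have [-> | nS] := eqVneq (S :\: S') set0; last first.
  apply: pmweight_gpairs => // [d x x2 | d x /S_notV2 n2 | ]; rewrite /vcd1 ?x2 ?(negPf n2) //.
  exact: subsetDl.
rewrite pmweight_set0 setU0 (eq_bigr (fun d : 'I_ncol => lam1 d * beta d)%R) => [|d _].
  by rewrite mulVf ?bl_neq0.
by congr (_ * _)%R; apply: eq_pmweight => x x2; rewrite /vcd1 x2.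
Qed.

Lemma pmweight_gcase1 (vc' : {x : V | in_V1S x} -> nat) :
  pmweight (g:=gcase1) setT (extend vc') [set x | in_V1S x] =
  ((if ok_colour (vc' v1S) then kap1 (vc' v1S) else 0) * bl^-1 *
   \sum_(d < ncol) lam1 d * vc_weight M (vcd1 vc' d))%R.
Proof.
rewrite set_V1S pmweight_sum_gpairs ?disjoint_V1S //.
under [in RHS]eq_bigr => d _.
  rewrite vc_weight_cut mulr_sumr.
  under eq_bigr => S' sS.
    rewrite (@eq_pmweight _ _ E1 _ (extend vc') (V1 :|: S')) => [|x]; last first.
      by rewrite !inE /vcd1 => /orP[/V1_notV2 | /(subsetP sS)/S_notV2] /negPf ->.
    rewrite mulrCA; over.
  over.
rewrite /= exchange_big /= mulr_sumr; apply: eq_bigr => S' sS.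
rewrite pmweight_g1 ?inE ?v0_V1 // (extend_val vc' v1S) pmweight_gpairs1 // -mulr_sumr.
by ring.
Qed.

Lemma mu_ge_V1S n : dim_ge M n -> mu_ge [rel u v : {x : V | in_V1S x} | u != v] n.
Proof.
case/dim_ok_colours => cs [ok_cs cs_inj].
apply: (mu_ge_completion (x0 := v1S) gcase1_in gcase1_loopless _ _ _ ok_cs cs_inj).
- move=> vc' mono [j|t] /= jv0 kj; rewrite -(extend_val vc' v1S).
    have := valP j; rewrite inE => /andP[_].
    by rewrite (@allowed_incident _ gM v0 ok_colour (extend vc') (val j) kj jv0).
  by case/orP: jv0 => /eqP ev0; [have := pv_S t.1.1 | have := qv_S t.1.1];
    rewrite [X in X \in S]ev0 => /S_notV1; rewrite v0_V1.
- move=> vc' mono okc; rewrite pmweight_gcase1 okc.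
  rewrite (@sum_delta _ lam1 (fun d => vc_weight M (vcd1 vc' d)) (vc' v1S)).
  + by rewrite /kap1 /=; field; rewrite bl_neq0 lam1_neq0.
  + by case/andP: okc.
  + apply: (vc_weight_const okc) => x; rewrite /vcd1; case: ifP => // n2.
    by rewrite -[x]/(val (exist in_V1S x (negbT n2))) extend_val (mono _ v1S).
  + move=> d nd; apply: vc_weight_nonmono => mono'; case/eqP: nd.
    by rewrite -(vcd1_val vc' d v1S) -(mono' y2 (val v1S)) /vcd1 y2_V2.
- move=> vc' nmono; rewrite pmweight_gcase1 big1 ?mulr0 // => d _.
  by rewrite vc_weight_nonmono ?mulr0 //; apply: not_monochromatic_comp (vcd1_val vc' d) nmono.
Qed.
End NonzeroBeta.

Section ZeroBeta.
Hypothesis beta0 : forall d : 'I_ncol, beta d = 0%R.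

Definition in_Sv0 x : bool := (x \in S) || (x == v0).
Definition vS0 : {x : V | in_Sv0 x} := exist _ v0 (introT orP (or_intror (eqxx v0))).

Lemma set_Sv0 : [set x | in_Sv0 x] = v0 |: S.
Proof. by apply/setP=> x; rewrite !inE /in_Sv0 orbC. Qed.

Lemma v0_neq_sv k : v0 != sv k.
Proof. by apply: contraTneq v0_V1 => ->; apply: S_notV1 (sv_S k). Qed.

Definition starcol k (e al : nat) x : nat := if x == sv k then al else e.

Definition star_weight k (e al : nat) : CC := pmweight E1 (starcol k e al) (V1 :|: [set sv k]).

(* One edge v0 -- sv k for each ok colour e at v0 and each colour al at sv k;
   its weight is that of the matchings of V1 + sv k by E1 when V1 is coloured e. *)
Definition gstar : wgraph V :=
  @WGraph V {t : 'I_3 * 'I_ncol * 'I_ncol | ok_colour t.1.2} (fun _ => v0)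
    (fun t => sv (val t).1.1) (fun t => (val t).1.2 : nat) (fun t => (val t).2 : nat)
    (fun t => star_weight (val t).1.1 (val t).1.2 (val t).2).

Lemma gstar_loopfree (A : {set Edge gstar}) : loopfree A.
Proof. by move=> t _; apply: v0_neq_sv. Qed.

Lemma pmweight_gstar_pair vc k :
  pmweight (g:=gstar) setT vc [set v0; sv k] =
  if ok_colour (vc v0) && (vc (sv k) < ncol)
  then star_weight k (vc v0) (vc (sv k)) else 0%R.
Proof.
rewrite pmweight_pair ?v0_neq_sv //; last exact: gstar_loopfree.
have kept_pair (t : Edge gstar) :
    kept vc t && ([set v0; sv (val t).1.1] == [set v0; sv k]) =
    [&& (val t).1.1 == k, (val t).1.2 == vc v0 :> nat & (val t).2 == vc (sv k) :> nat].
  rewrite /kept /=; case: (eqVneq (val t).1.1 k) => [-> | nk]; first by rewrite eqxx andbT.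
  have -> : ([set v0; sv (val t).1.1] == [set v0; sv k]) = false.
    apply: contraNF nk => /eqP e; apply/eqP/sv_inj.
    have := congr1 (fun X : {set V} => sv (val t).1.1 \in X) e; rewrite /= !inE eqxx orbT.
    by case/esym/orP=> /eqP // ev0; have := v0_neq_sv (val t).1.1; rewrite ev0 eqxx.
  by rewrite andbF.
case: ifP => [/andP[okv lt_k] | bad].
  rewrite (big_pred1 (exist _ (k, Ordinal (proj1 (andP okv)), Ordinal lt_k) okv)) // => t.
  rewrite in_setT kept_pair /=; apply/and3P/eqP => [[/eqP ek /eqP e1 /eqP e2] | -> /=].
    by apply: val_inj; case: t ek e1 e2 => -[[l al] be] ? /= -> e1 e2; congr (_, _, _); apply: val_inj.
  by rewrite !eqxx.
rewrite big_pred0 // => t; rewrite in_setT kept_pair /=.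
apply: contraFF bad => /and3P[_ /eqP <- /eqP <-]; rewrite ltn_ord andbT.
by case: t => -[[l al] be] /=.
Qed.

Lemma pmweight_gstar vc (vcE : V -> nat) (S' : {set V}) : S' \subset S -> S' != S ->
  (forall x, x \in V1 -> vcE x = vc v0) -> (forall x, x \in S -> vcE x = vc x) ->
  pmweight (g:=gstar) setT vc (v0 |: S') =
  ((if ok_colour (vc v0) then 1 else 0) * pmweight E1 vcE (V1 :|: S'))%R.
Proof.
move=> sS nS vcE_V1 vcE_S.
have v0S' : v0 \notin S' by apply: contraTN v0_V1 => /(subsetP sS)/S_notV1.
case: (boolP (odd #|S'|)) => oS; last first.
  rewrite pmweight_odd ?cardsU1 ?v0S' ?(negPf oS) //; last exact: gstar_loopfree.
  rewrite pmweight_odd ?mulr0 ?card_V1U ?oddD ?V1_odd ?(negPf oS) //; exact: gM_loopfree.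
have /(singleton_of_cut sS)[k ->] : #|S'| = 1.
  have : #|S'| < 3.
    rewrite ltn_neqAle -card_S (subset_leq_card sS) andbT.
    by apply: contra nS => /eqP cS; rewrite eqEcard sS cS leqnn.
  by move: oS; case: #|S'| => [|[|[]]].
have E1_star : pmweight E1 vcE (V1 :|: [set sv k]) = star_weight k (vc v0) (vc (sv k)).
  apply: eq_pmweight => x; rewrite !inE /starcol => /orP[x1 | /eqP->]; last first.
    by rewrite eqxx vcE_S ?sv_S.
  by rewrite vcE_V1 // (_ : (x == sv k) = false) //; apply: contraTF x1 => /eqP->; apply: S_notV1 (sv_S k).
rewrite pmweight_gstar_pair E1_star; case: (ok_colour (vc v0)); rewrite ?mul0r ?mul1r //=.
case: ltnP => // large; rewrite -E1_star (@pmweight_large_colour _ _ _ (sv k)) //.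
  by rewrite !inE eqxx orbT.
by rewrite vcE_S ?sv_S.
Qed.

Definition gcase2 : wgraph V := wgraph_sum gstar (gpairs (fun _ => 1%R) 1%R).

Lemma gcase2_in (i : Edge gcase2) : in_Sv0 (esrc i) && in_Sv0 (edst i).
Proof. by case: i => [t|t]; rewrite /in_Sv0 /= ?eqxx ?orbT ?sv_S ?pv_S ?qv_S. Qed.

Lemma gcase2_loopless (i : Edge gcase2) : esrc i != edst i.
Proof. by case: i => [t|t] /=; [apply: v0_neq_sv | apply: pv_neq_qv]. Qed.

Definition vcd2 (vc' : {x : V | in_Sv0 x} -> nat) (d : nat) x : nat :=
  if x \in V2 then d else if x \in V1 then extend vc' v0 else extend vc' x.

Lemma vcd2_val (vc' : {x : V | in_Sv0 x} -> nat) d y : vcd2 vc' d (val y) = vc' y.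
Proof.
rewrite /vcd2; case/orP: (valP y) => [yS | /eqP ey].
  by rewrite (negPf (S_notV2 yS)) (negPf (S_notV1 yS)) extend_val.
by rewrite ey (negPf (V1_notV2 v0_V1)) v0_V1 -ey extend_val.
Qed.

Lemma pmweight_gcase2 (vc' : {x : V | in_Sv0 x} -> nat) :
  pmweight (g:=gcase2) setT (extend vc') [set x | in_Sv0 x] =
  ((if ok_colour (vc' vS0) then 1 else 0) * \sum_(d < ncol) vc_weight M (vcd2 vc' d))%R.
Proof.
rewrite set_Sv0 pmweight_sum_gpairs; last first.
  by rewrite disjoints1; apply: contraTN v0_V1 => /S_notV1.
under [in RHS]eq_bigr => d _.
  rewrite vc_weight_cut.
  under eq_bigr => S' sS.
    rewrite (@eq_pmweight _ _ E1 _ (vcd2 vc' 0) (V1 :|: S')) => [|x]; last first.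
      by rewrite !inE /vcd2 => /orP[/V1_notV2 | /(subsetP sS)/S_notV2] /negPf ->.
    over.
  over.
rewrite /= exchange_big /= mulr_sumr; apply: eq_bigr => S' sS; rewrite -mulr_sumr.
have [-> | nS] := eqVneq S' S.
  rewrite setDv setU0 big1 ?mulr0; last first.
    by move=> d _; rewrite -(beta0 d); apply: eq_pmweight => x x2; rewrite /vcd2 x2.
  rewrite (@pmweight_star _ _ _ _ _ v0) ?mul0r // => [|t _|]; first exact: gstar_loopfree.
    exact: incident_src.
  by rewrite cardsU1 card_S (_ : v0 \notin S) //; apply: contraTN v0_V1 => /S_notV1.
rewrite (pmweight_gstar (vcE := vcd2 vc' 0)) //.
- rewrite (extend_val vc' vS0) (pmweight_gpairs _ _ (vcd := vcd2 vc')) ?subsetDl //.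
  + by rewrite mul1r; under [X in (_ * X)%R]eq_bigr do rewrite mul1r; rewrite mulrA.
  + by move=> d x x2; rewrite /vcd2 x2.
  + by move=> d x xS; rewrite /vcd2 (negPf (S_notV2 xS)) (negPf (S_notV1 xS)).
  + by apply: contra nS; rewrite setD_eq0 => sS'; rewrite eqEsubset sS sS'.
- by move=> x x1; rewrite /vcd2 x1 (negPf (V1_notV2 x1)).
- by move=> x xS; rewrite /vcd2 (negPf (S_notV2 xS)) (negPf (S_notV1 xS)).
Qed.

Lemma mu_ge_Sv0 n : dim_ge M n -> mu_ge [rel u v : {x : V | in_Sv0 x} | u != v] n.
Proof.
case/dim_ok_colours => cs [ok_cs cs_inj].
apply: (mu_ge_completion (x0 := vS0) gcase2_in gcase2_loopless _ _ _ ok_cs cs_inj).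
- move=> vc' mono [t|t] /= tv0 kt; rewrite -(extend_val vc' vS0).
    by case/andP: kt => /eqP <- _; apply: (valP t).
  by case/orP: tv0 => /eqP ev0; [have := pv_S t.1.1 | have := qv_S t.1.1];
    rewrite [X in X \in S]ev0 => /S_notV1; rewrite v0_V1.
- move=> vc' mono okc; rewrite pmweight_gcase2 okc mul1r.
  under eq_bigr do rewrite -[vc_weight M _]mul1r.
  rewrite (@sum_delta _ (fun _ => 1%R) (fun d => vc_weight M (vcd2 vc' d)) (vc' vS0)) //.
  + by case/andP: okc.
  + apply: (vc_weight_const okc) => x; rewrite /vcd2; case: ifP => // n2.
    case: ifP => [_ | n1]; first by rewrite (extend_val vc' vS0).
    have xSv0 : in_Sv0 x by rewrite /in_Sv0 (notV12_S (negbT n1) (negbT n2)).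
    by rewrite -[x]/(val (exist in_Sv0 x xSv0)) extend_val (mono _ vS0).
  + move=> d nd; apply: vc_weight_nonmono => mono'; case/eqP: nd.
    by rewrite -(vcd2_val vc' d vS0) -(mono' y2 (val vS0)) /vcd2 y2_V2.
- move=> vc' nmono; rewrite pmweight_gcase2 big1 ?mulr0 // => d _.
  by rewrite vc_weight_nonmono //; apply: not_monochromatic_comp (vcd2_val vc' d) nmono.
Qed.
End ZeroBeta.

Lemma mu_ge_cut_dichotomy n : dim_ge M n ->
  mu_ge [rel u v : {x : V | in_V1S x} | u != v] n \/
  mu_ge [rel u v : {x : V | in_Sv0 x} | u != v] n.
Proof.
case: (boolP [exists d : 'I_ncol, beta d != 0%R]) => [/existsP[d0 nz] | /existsPn beta0] dim.
  by left; exact (mu_ge_V1S nz dim).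
by right; apply: (mu_ge_Sv0 _ dim) => d; apply/eqP/negbNE/beta0.
Qed.

End Cut3.

Lemma ecskeleton_no_edge (V : finType) (M : ecgraph V) (g : rel V) (X Y : {set V}) :
  ecskeleton M =2 g -> (forall u v, u \in X -> v \in Y -> ~~ g u v) ->
  (forall i, src M i \in X -> dst M i \notin Y) /\ (forall i, src M i \in Y -> dst M i \notin X).
Proof.
move=> skel noXY; split=> i si; apply/negP=> di.
  by have := noXY _ _ si di; rewrite -skel; case/negP; apply/existsP; exists i; rewrite !eqxx.
by have := noXY _ _ di si; rewrite -skel; case/negP; apply/existsP; exists i; rewrite !eqxx orbT.
Qed.

Lemma mu_ge_cut3 (V : finType) (G : mgraph V) (S V1 V2 : {set V}) (v0 : V) :
  #|S| = 3 -> V1 :|: V2 = ~: S -> V1 :&: V2 = set0 -> v0 \in V1 -> V2 != set0 ->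
  (forall u v, u \in V1 -> v \in V2 -> ~~ mskeleton G u v) ->
  odd #|V1| -> ~~ odd #|V2| -> forall n, mu_ge (mskeleton G) n ->
  mu_ge [rel u v : {x : V | in_V1S V2 x} | u != v] n \/
  mu_ge [rel u v : {x : V | in_Sv0 S v0 x} | u != v] n.
Proof.
move=> card_S part disj v0_V1 /set0Pn[y2 y2_V2] noV12 odd1 even2 n [M [loopless skel ghz dim]].
have [no12 no21] := ecskeleton_no_edge skel noV12.
exact: (mu_ge_cut_dichotomy loopless no12 no21 part disj v0_V1 y2_V2 odd1 even2 card_S ghz dim).
Qed.

Lemma card_cut3 (V : finType) (S V1 V2 : {set V}) :
  #|S| = 3 -> V1 :|: V2 = ~: S -> V1 :&: V2 = set0 ->
  #|V| = #|V1| + #|V2| + 3 /\ #|~: V2| = #|V1| + 3.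
Proof.
move=> card_S part disj.
have := congr1 (fun X : {set V} => #|X|) part; rewrite /= cardsU disj cards0 subn0 => e12.
have eV : #|V| = #|V1| + #|V2| + 3 by rewrite -(cardsC S) card_S -e12 addnC.
by split=> //; have := cardsC V2; rewrite eV; lia.
Qed.

Theorem theorem7 (V : finType) (G : mgraph V) (S V1 V2 : {set V}) :
  mloopless G ->
  #|S| = 3 ->
  vertex_cut (mskeleton G) S ->
  V1 :|: V2 = ~: S ->
  V1 :&: V2 = set0 ->
  V1 != set0 -> V2 != set0 ->
  (forall u v, u \in V1 -> v \in V2 -> ~~ mskeleton G u v) ->
  odd #|V1| -> ~~ odd #|V2| ->
  exists (V' : finType) (G' : rel V'),
    [/\ simple_graph G',
        #|V'| <= #|V1| + 3,
        #|V1| + 3 <= #|V| - 2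
      & mu_le (mskeleton G) G'].
Proof.
move=> _ card_S _ part disj /set0Pn[v0 v0_V1] nV2 noV12 odd1 even2.
have [card_V card_V1S] := card_cut3 card_S part disj.
have V2_ge2 : 1 < #|V2| by move: even2 nV2; rewrite -card_gt0; case: #|V2| => [|[]].
have v0_S : v0 \notin S by apply/negP => /(S_notV1 part); rewrite v0_V1.
have size_ok : #|V1| + 3 <= #|V| - 2 by rewrite card_V; lia.
case: (mu_le_cover (mu_ge_cut3 card_S part disj v0_V1 nV2 noV12 odd1 even2)) => le.
  exists {x : V | in_V1S V2 x}, [rel u v | u != v]; split=> //; first exact: simple_graph_complete.
  by rewrite card_sig -card_V1S; apply/eq_leq/eq_card => x; rewrite !inE /in_V1S.
exists {x : V | in_Sv0 S v0 x}, [rel u v | u != v]; split=> //; first exact: simple_graph_complete.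
rewrite card_sig (_ : #|_| = #|v0 |: S|); last first.
  by apply: eq_card => x; rewrite -set_Sv0 !inE.
have : 0 < #|V1| by rewrite card_gt0; apply/set0Pn; exists v0.
by rewrite cardsU1 v0_S card_S; lia.
Qed.
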